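(* Suppose that $\Sigma=(X,U,F)$ is a system, $Q\subset X$ is controlled invariant, and $(\mathcal{A},G)$ is a quasi-invariant-partition of $Q$. Then \[h_{inv}(\mathcal{A},G)=\lim_{m\to\infty}\frac1m\max_{\alpha\in W_m(\mathcal{A},G)}\sum_{i=0}^{m-2}w(\alpha(i)).\]
   Context: A system is a triple $\Sigma=(X,U,F)$ where $X,U$ are nonempty sets and $F:X\times U\rightrightarrows X$ is a set-valued map with $F(x,u)\neq\emptyset$ for all $(x,u)$; for $A\subset X$, $F(A,u)=\bigcup_{x\in A}F(x,u)$. $Q\subset X$ is controlled invariant if for every $x\in Q$ there is $u\in U$ with $F(x,u)\subset Q$. An invariant cover of $Q$ is a pair $(\mathcal{A},G)$ where $\mathcal{A}$ is a finite cover of $Q$ (by subsets of $Q$) and $G:\mathcal{A}\to U$ satisfies $F(A,G(A))\subset Q$ for all $A\in\mathcal{A}$. For $\mathcal{S}\subset\mathcal{A}^n$, $\alpha=\alpha(0)\cdots\alpha(n-1)\in\mathcal{S}$ and integer $0\le t<n-1$, let $P(\alpha|_{[0,t]})=\{A\in\mathcal{A}:\exists\hat\alpha\in\mathcal{S},\ \hat\alpha|_{[0,t]}=\alpha|_{[0,t]},\ A=\hat\alpha(t+1)\}$, and $P(\alpha|_{[0,n-1]})=P(\alpha)=\{\hat\alpha(0):\hat\alpha\in\mathcal{S}\}$. $\mathcal{S}$ is $(n,Q)$-spanning in $(\mathcal{A},G)$ if (1) the elements of $P(\alpha)$ cover $Q$, and (2) for every $\alpha\in\mathcal{S}$ and $0\le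 t<n-1$, $F(\alpha(t),G(\alpha(t)))\subset\bigcup_{A'\in P(\alpha|_{[0,t]})}A'$. Let $N(\mathcal{S})=\max_{\alpha\in\mathcal{S}}\prod_{t=0}^{n-1}\sharp P(\alpha|_{[0,t]})$, $r_{inv}(n,Q,\mathcal{A},G)=\min\{N(\mathcal{S}):\mathcal{S}\ (n,Q)\text{-spanning in }(\mathcal{A},G)\}$, and $h_{inv}(\mathcal{A},G)=\lim_{n\to\infty}\frac1n\log r_{inv}(n,Q,\mathcal{A},G)$ ($\log$ base $2$). For $A\in\mathcal{A}$: $D(A)=\{A'\in\mathcal{A}:F(A,G(A))\cap A'\neq\emptyset\}$ and $w(A)=\log\sharp D(A)$. $W_m(\mathcal{A},G)$ is the set of sequences $(A_i)_{i=0}^{m-1}$ in $\mathcal{A}$ with $F(A_i,G(A_i))\cap A_{i+1}\neq\emptyset$ for all $0\le i<m-1$. An invariant cover $(\mathcal{A},G)$ is a quasi-invariant-partition of $Q$ if $A\setminus\bigcup_{B\in\mathcal{A},B\neq A}B\neq\emptyset$ for all $A\in\mathcal{A}$, and $F(A,G(A))\cap\big(B\setminus\bigcup_{C\in D(A),C\neq B}C\big)\neq\emptyset$ for all $A\in\mathcal{A}$ and $B\in D(A)$. *)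

From Stdlib Require Import Reals.
From mathcomp Require Import all_boot.
From mathcomp Require Import boolp.

Set Implicit Arguments.
Unset Strict Implicit.
Unset Printing Implicit Defensive.

Definition is_system (X U : Type) (F : X -> U -> X -> Prop) : Prop :=
  inhabited X /\ inhabited U /\ (forall x u, exists y, F x u y).

Definition controlled_invariant (X U : Type) (F : X -> U -> X -> Prop)
  (Q : X -> Prop) : Prop :=
  forall x, Q x -> exists u, forall y, F x u y -> Q y.

(* ---------- Covers ----------
   A finite cover \mathcal{A} is represented as an injective family
   cov : I -> (X -> Prop) indexed by a finite type I (injectivity makes the
   family a genuine finite set of subsets); G : I -> U. *)

Definition invariant_cover (X U : Type) (F : X -> U -> X -> Prop)
  (Q : X -> Prop) (I : finType) (cov : I -> X -> Prop) (G : I -> U) : Prop :=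
  injective cov /\
  (forall i x, cov i x -> Q x) /\
  (forall x, Q x -> exists i, cov i x) /\
  (forall i x y, cov i x -> F x (G i) y -> Q y).

Section Cover.
Variables (X U : Type) (F : X -> U -> X -> Prop) (Q : X -> Prop)
  (I : finType) (cov : I -> X -> Prop) (G : I -> U).

Definition Dset (i : I) : {set I} :=
  [set j | `[< exists x y, cov i x /\ F x (G i) y /\ cov j y >] ].

(* log base 2 (Stdlib ln is 0 on nonpositive arguments) *)
Definition log2 (r : R) : R := Rdiv (ln r) (ln 2).

Definition wgt (i : I) : R := log2 (INR #|Dset i|).

Definition quasi_invariant_partition : Prop :=
  invariant_cover F Q cov G /\
  (forall i, exists x, cov i x /\ forall j, j <> i -> ~ cov j x) /\
  (forall i j, j \in Dset i ->
     exists x y, cov i x /\ F x (G i) y /\ cov j y /\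
       forall k, k \in Dset i -> k <> j -> ~ cov k y).

(* ---------- (n,Q)-spanning sets ----------
   Elements alpha of \mathcal{A}^n are n-tuples of indices; alpha(t) is
   onth alpha t, and alpha|_[0,t] is take t.+1 alpha. *)

Definition Pfirst (n : nat) (S : {set n.-tuple I}) : {set I} :=
  [set A | [exists b in S, onth b 0 == Some A]].

(* P(alpha|_[0,t]) for 0 <= t < n-1, and P(alpha) for t >= n-1 *)
Definition Pset (n : nat) (S : {set n.-tuple I}) (a : n.-tuple I) (t : nat)
  : {set I} :=
  if t < n.-1 then
    [set A | [exists b in S,
               (take t.+1 b == take t.+1 a) && (onth b t.+1 == Some A)]]
  else Pfirst S.

Definition spanning (n : nat) (S : {set n.-tuple I}) : Prop :=
  (forall x, Q x -> exists A, A \in Pfirst S /\ cov A x) /\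
  (forall a, a \in S -> forall t A, t < n.-1 -> onth a t = Some A ->
     forall x y, cov A x -> F x (G A) y ->
       exists A', A' \in Pset S a t /\ cov A' y).

Definition Nspan (n : nat) (S : {set n.-tuple I}) : nat :=
  \max_(a in S) \prod_(t < n) #|Pset S a t|.

(* r_inv(n,Q,A,G) = min{ N(S) : S (n,Q)-spanning }.  The seed N(setT) of the
   fold is itself a value N(S) of a spanning S (setT is spanning for n >= 1),
   so this is the genuine minimum. *)
Definition r_inv (n : nat) : nat :=
  \big[minn/Nspan [set: n.-tuple I]]_(S : {set n.-tuple I} | `[< spanning S >])
     Nspan S.

Definition hinv_seq (n : nat) : R := Rdiv (log2 (INR (r_inv n))) (INR n).

Definition trans_rel (i j : I) : Prop :=
  exists x y, cov i x /\ F x (G i) y /\ cov j y.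

Definition inW (m : nat) (a : m.-tuple I) : bool :=
  sorted (fun i j => `[< trans_rel i j >]) a.

Definition path_weight (m : nat) (a : m.-tuple I) : R :=
  \big[Rplus/R0]_(A <- take m.-1 a) wgt A.

Definition wpath_seq (m : nat) : R :=
  Rdiv (\big[Rmax/R0]_(a : m.-tuple I | inW a) path_weight a) (INR m).

End Cover.

(* Write M_n for the largest product of the #D(alpha(i)), i < n - 1, over
   alpha in W_n.  Since every cell has a private point and every A' in D(A) a
   private point of F(A, G(A)), an (n,Q)-spanning set contains all of W_n and
   satisfies D(alpha(t)) ⊆ P(alpha|[0,t]); hence r_inv(n) >= M_n.  Conversely
   W_n is itself (n,Q)-spanning with P(alpha|[0,t]) ⊆ D(alpha(t)), so
   r_inv(n) <= #A M_n.  Splitting sequences of W_(m+k) shows that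
   n |-> log(#A M_n) is subadditive, so by Fekete's lemma (1/n) log(#A M_n)
   converges; both (1/n) log r_inv(n) and (1/n) log M_n, which is the
   weighted-path quantity, stay within (log #A)/n of it. *)

From Stdlib Require Import Reals Lra Classical.
From mathcomp Require Import all_boot order.
From mathcomp Require Import boolp.
From mathcomp Require Import zify.

Set Implicit Arguments.
Unset Strict Implicit.
Unset Printing Implicit Defensive.

Section RealSequences.
Local Open Scope R_scope.

Lemma cv_infty_INR : cv_infty INR.
Proof.
move=> M; have [N HN] := INR_archimed 1 M Rlt_0_1.
by exists N => n /le_INR; lra.
Qed.

Lemma Un_cv_div_INR (c : R) : Un_cv (fun n => c / INR n) 0.
Proof.
have cv_c : Un_cv (fun=> c) c.
  by move=> eps eps_gt0; exists 0%N => n _; rewrite /Rdist Rminus_diag Rabs_R0.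
have := CV_mult _ _ _ _ cv_c (cv_infty_cv_0 _ cv_infty_INR).
by rewrite Rmult_0_r.
Qed.

Lemma Un_cv_div_close (a b : nat -> R) (c L : R) : 0 <= c ->
  Un_cv (fun n => a n / INR n) L ->
  (forall n, (0 < n)%N -> Rabs (b n - a n) <= c) ->
  Un_cv (fun n => b n / INR n) L.
Proof.
move=> c_ge0 cv_a close eps eps_gt0.
have [N1 HN1] := cv_a (eps / 2) ltac:(lra).
have [N2 HN2] := @Un_cv_div_INR c (eps / 2) ltac:(lra).
exists (N1 + N2).+1 => n /leP n_ge.
have n_gt0 : 0 < INR n by apply: lt_0_INR; lia.
have n_ge_N : (n >= N1)%coq_nat /\ (n >= N2)%coq_nat by lia.
have := HN1 n n_ge_N.1; have := HN2 n n_ge_N.2.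
rewrite /Rdist Rminus_0_r Rabs_pos_eq; last by apply: Rle_mult_inv_pos.
have : Rabs ((b n - a n) / INR n) <= c / INR n.
  rewrite /Rdiv Rabs_mult Rabs_inv (Rabs_pos_eq (INR n)); last lra.
  apply: Rmult_le_compat_r; first by left; apply: Rinv_0_lt_compat.
  by apply: close; apply/ltP; lia.
have -> : b n / INR n - L = (a n / INR n - L) + (b n - a n) / INR n by field; lra.
have := Rabs_triang (a n / INR n - L) ((b n - a n) / INR n).
lra.
Qed.

End RealSequences.

Section Fekete.
Local Open Scope R_scope.
Variable d : nat -> R.
Hypothesis d_ge0 : forall n, 0 <= d n.
Hypothesis d_subadd : forall m k, d (m + k) <= d m + d k.

Lemma subadditive_iter k q r : d (q * k + r) <= INR q * d k + d r.
Proof.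
elim: q => [|q IH]; first by rewrite mul0n add0n /=; lra.
rewrite mulSn -addnA S_INR.
by have := d_subadd k (q * k + r); lra.
Qed.

Lemma subadditive_ratio_le k n : (0 < k)%N -> (0 < n)%N ->
  d n / INR n <= d k / INR k + (d 0 + INR k * d 1) / INR n.
Proof.
move=> /ltP k_gt0 /ltP n_gt0.
have k_pos : 0 < INR k by apply: lt_0_INR.
have n_pos : 0 < INR n by apply: lt_0_INR.
have dk : 0 <= d k / INR k by apply: Rle_mult_inv_pos.
have n_div : n = (n %/ k * k + n %% k)%N by rewrite -divn_eq.
have r_lt : (n %% k < k)%N by rewrite ltn_mod; apply/ltP.
have qk_le : INR (n %/ k) * INR k <= INR n.
  by rewrite -mult_INR; apply: le_INR; apply/leP; rewrite multE leq_divM.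
have dr : d (n %% k) <= d 0 + INR k * d 1.
  have := subadditive_iter 1 (n %% k) 0; rewrite muln1 addn0 => /Rle_trans; apply.
  have := le_INR _ _ (leP (ltnW r_lt)); have := d_ge0 1; nra.
have dn : d n <= INR (n %/ k) * d k + d (n %% k).
  by rewrite {1}n_div; apply: subadditive_iter.
set u := d k / INR k in dk *.
have dk_eq : d k = u * INR k by rewrite /u; field; lra.
have dn_le : d n <= u * INR n + (d 0 + INR k * d 1).
  by rewrite dk_eq in dn; nra.
apply: Rle_trans (Rmult_le_compat_r (/ INR n) _ _ _ dn_le) _.
  by left; apply: Rinv_0_lt_compat.
by right; field; lra.
Qed.

Lemma fekete : exists L, Un_cv (fun n => d n / INR n) L.
Proof.
(* [completeness] only provides suprema: the limit is the infimum of the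
   ratios, obtained as minus the supremum of their opposites. *)
pose E x := exists n, x = - (d n.+1 / INR n.+1).
have E_bound : bound E.
  exists 0 => _ [n ->].
  have : 0 <= d n.+1 / INR n.+1 by apply: Rle_mult_inv_pos; [|apply: lt_0_INR; lia].
  lra.
have [l [l_ub l_lub]] := completeness E E_bound (ex_intro _ _ (ex_intro _ 0%N erefl)).
exists (- l) => eps eps_gt0.
have [k [k_gt0 k_close]] : exists k, (0 < k)%N /\ d k / INR k < - l + eps / 2.
  apply: NNPP => no_k.
  suff : l <= l - eps / 2 by lra.
  apply: l_lub => _ [n ->].
  have [|] := Rlt_or_le (d n.+1 / INR n.+1) (- l + eps / 2); last lra.
  by move=> close; case: no_k; exists n.+1.
have [N HN] := @Un_cv_div_INR (d 0 + INR k * d 1) (eps / 2) ltac:(lra).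
exists N.+1 => -[|n] /leP n_ge; first by [].
have := l_ub _ (ex_intro _ n erefl).
have := HN n.+1 ltac:(apply/leP; lia).
have := subadditive_ratio_le k_gt0 (ltn0Sn n).
rewrite /Rdist Rminus_0_r => ratio_le /Rabs_def2 [B_lt _] l_le.
by apply: Rabs_def1; lra.
Qed.

End Fekete.

Section Log2.
Local Open Scope R_scope.

Lemma log2_INR0 : log2 (INR 0) = 0.
Proof.
rewrite /log2 /= /ln; case: Rlt_dec => [/Rlt_irrefl //|_].
by rewrite /Rdiv Rmult_0_l.
Qed.

Lemma ln_le x y : 0 < x -> x <= y -> ln x <= ln y.
Proof.
move=> x_gt0 [lt_xy|<-]; last exact: Rle_refl.
by left; apply: ln_increasing.
Qed.

Lemma ln2_gt0 : 0 < ln 2.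
Proof. by rewrite -ln_1; apply: ln_increasing; lra. Qed.

Lemma log2_INR_ge0 n : 0 <= log2 (INR n).
Proof.
case: n => [|n]; first by rewrite log2_INR0; apply: Rle_refl.
apply: Rle_mult_inv_pos; last exact: ln2_gt0.
rewrite -ln_1; apply: ln_le; first lra.
by rewrite S_INR; have := pos_INR n; lra.
Qed.

Lemma log2_INR_le m n : (m <= n)%N -> log2 (INR m) <= log2 (INR n).
Proof.
case: m => [|m] le_mn; first by rewrite log2_INR0; apply: log2_INR_ge0.
apply: Rmult_le_compat_r; first by left; apply: Rinv_0_lt_compat; apply: ln2_gt0.
by apply: ln_le; [apply: lt_0_INR; lia | apply: le_INR; apply/leP].
Qed.

Lemma log2_INR_mul m n : (0 < m)%N -> (0 < n)%N ->
  log2 (INR (m * n)) = log2 (INR m) + log2 (INR n).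
Proof.
move=> /ltP m_gt0 /ltP n_gt0.
rewrite -multE mult_INR /log2 ln_mult; try exact: lt_0_INR.
by field; have := ln2_gt0; lra.
Qed.

Lemma log2_INR_mul_le m n : log2 (INR (m * n)) <= log2 (INR m) + log2 (INR n).
Proof.
have := log2_INR_ge0 m; have := log2_INR_ge0 n.
case: m => [|m]; first by rewrite mul0n log2_INR0; lra.
case: n => [|n]; first by rewrite muln0 log2_INR0; lra.
by rewrite log2_INR_mul //; lra.
Qed.

Lemma log2_INR_max m n : log2 (INR (maxn m n)) = Rmax (log2 (INR m)) (log2 (INR n)).
Proof.
case: leqP => [le_mn|lt_nm]; first by rewrite Rmax_right //; apply: log2_INR_le.
by rewrite Rmax_left //; apply: log2_INR_le; apply: ltnW.
Qed.

Lemma dist_log2_INR_le k m r : (m <= r)%N -> (r <= k * m)%N ->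
  Rabs (log2 (INR r) - log2 (INR (k * m))) <= log2 (INR k).
Proof.
move=> /log2_INR_le le_mr /log2_INR_le le_rkm.
have := log2_INR_mul_le k m.
by rewrite Rabs_left1; lra.
Qed.

End Log2.

Lemma sorted_take_cat_path (T : Type) (e : rel T) (x0 : T) (s r : seq T) t y :
  sorted e s -> t < size s -> e (nth x0 s t) y -> path e y r ->
  sorted e (take t.+1 s ++ y :: r).
Proof.
case: s => [//|x s] sorted_s lt_t e_ty path_yr.
rewrite sorted_cat_cons path_yr andbT /= rcons_path take_path //=.
have size_take : size (take t s) = t by rewrite size_takel.
rewrite (last_nth x) size_take -[x :: take t s]/(take t.+1 (x :: s)) nth_take //.
by rewrite (set_nth_default x0).
Qed.

Section QuasiInvariantPartition.
Variables (X U : Type) (F : X -> U -> X -> Prop) (Q : X -> Prop)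
  (I : finType) (cov : I -> X -> Prop) (G : I -> U).
Hypothesis system_F : is_system F.
Hypothesis qip : quasi_invariant_partition F Q cov G.

Local Notation D := (Dset F cov G).
Local Notation spanning := (spanning F Q cov G).

Definition transb : rel I := fun i j => `[< trans_rel F cov G i j >].

Lemma inWE n (a : n.-tuple I) : inW F cov G a = sorted transb a.
Proof. by []. Qed.

Lemma in_Dset i j : (j \in D i) = transb i j.
Proof. by rewrite inE. Qed.

Lemma Dset_nonempty i : exists j, j \in D i.
Proof.
case: qip => [[_ [_ [covers image_Q]]] [private _]].
have [x [cov_x _]] := private i.
have [_ [_ /(_ x (G i)) [y Fxy]]] := system_F.
have [j cov_y] := covers y (image_Q _ _ _ cov_x Fxy).
by exists j; rewrite in_Dset; apply/asboolP; exists x, y.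
Qed.

Lemma card_Dset_gt0 i : 0 < #|D i|.
Proof. by have [j Dj] := Dset_nonempty i; apply/card_gt0P; exists j. Qed.

Definition succ_cell (i : I) : I := odflt i [pick j in D i].

Lemma transb_succ_cell i : transb i (succ_cell i).
Proof.
rewrite -in_Dset /succ_cell; case: pickP => [j /= -> //|/= none].
by have [j Dj] := Dset_nonempty i; move: (none j); rewrite Dj.
Qed.

Lemma path_succ_cell i k : path transb i (traject succ_cell (succ_cell i) k).
Proof. by elim: k i => [//|k IH] i; rewrite trajectS /= transb_succ_cell IH. Qed.

Definition branching (n : nat) (s : seq I) : nat := \prod_(A <- take n.-1 s) #|D A|.

Definition max_branching (n : nat) : nat :=
  \max_(a : n.-tuple I | inW F cov G a) branching n a.

Lemma branching_le_max n (s : seq I) :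
  size s = n -> sorted transb s -> branching n s <= max_branching n.
Proof.
move=> /eqP size_s sorted_s.
exact: (@leq_bigmax_cond _ _ _ (Tuple size_s)).
Qed.

Lemma branching_nth (x0 : I) n (s : seq I) : n.-1 <= size s ->
  branching n s = \prod_(t < n.-1) #|D (nth x0 s t)|.
Proof.
move=> size_s; rewrite /branching (big_nth x0) size_takel // big_mkord.
by apply: eq_bigr => t _; rewrite nth_take.
Qed.

Lemma Dset_sub_Pset (x0 : I) n (S : {set n.-tuple I}) (a : n.-tuple I) t :
  spanning S -> a \in S -> t < n.-1 -> D (nth x0 a t) \subset Pset S a t.
Proof.
move=> span_S Sa lt_t; apply/subsetP => j Dj.
have a_t : onth a t = Some (nth x0 a t).
  by rewrite onthE (nth_map x0) // size_tuple; apply: leq_trans lt_t (leq_pred n).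
have [x [y [cov_x [Fxy [cov_y private_y]]]]] := qip.2.2 _ _ Dj.
have [j' [Pj' cov'_y]] := span_S.2 a Sa t _ lt_t a_t x y cov_x Fxy.
have Dj' : j' \in D (nth x0 a t) by rewrite in_Dset; apply/asboolP; exists x, y.
by have [<- //|/eqP ne_j'] := eqVneq j' j; case: (private_y j' Dj' ne_j').
Qed.

Lemma mem_Pfirst n (S : {set n.-tuple I}) i : spanning S -> i \in Pfirst S.
Proof.
move=> span_S; case: qip => [[_ [cov_Q _]] [private _]].
have [x [cov_x private_x]] := private i.
have [j [Pj cov_j]] := span_S.1 x (cov_Q _ _ cov_x).
by have [<- //|/eqP ne_ji] := eqVneq j i; case: (private_x j ne_ji).
Qed.

Lemma sorted_mem_spanning n (S : {set n.-tuple I}) (a : n.-tuple I) :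
  spanning S -> 0 < n -> sorted transb a -> a \in S.
Proof.
move=> span_S n_gt0 sorted_a; pose x0 := tnth a (Ordinal n_gt0).
have size_a : size a = n by rewrite size_tuple.
have prefix k : k < n -> exists2 b, b \in S & take k.+1 b = take k.+1 a.
  elim: k => [_|k IH lt_k].
    move: (mem_Pfirst (nth x0 a 0) span_S).
    rewrite inE => /existsP [b /andP [Sb /eqP b_0]].
    exists b => //.
    by rewrite !(take_nth x0) ?take0 ?size_tuple ?size_a // (onth_nth x0 _ _ _ b_0).
  have [b Sb eq_ba] := IH (ltnW lt_k).
  have ab_k : nth x0 b k = nth x0 a k by rewrite -(nth_take x0 (ltnSn k)) eq_ba nth_take.
  have : nth x0 a k.+1 \in D (nth x0 b k).
    by rewrite ab_k in_Dset; apply: (sortedP x0 sorted_a); rewrite size_a.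
  have lt_k' : k < n.-1 by rewrite -ltnS prednK.
  move/(subsetP (Dset_sub_Pset x0 span_S Sb lt_k')); rewrite /Pset lt_k'.
  rewrite inE => /existsP [b' /and3P [Sb' /eqP eq_b'b /eqP b'_k]].
  exists b' => //.
  rewrite (take_nth x0 (s := b')) ?size_tuple // (take_nth x0 (s := a)) ?size_a //.
  by rewrite eq_b'b eq_ba (onth_nth x0 _ _ _ b'_k).
have [b Sb] := prefix n.-1 ltac:(by rewrite prednK).
rewrite prednK // !take_oversize ?size_tuple // => eq_ba.
by rewrite (_ : a = b) //; apply: val_inj.
Qed.

Lemma branching_le_prod_Pset n (S : {set n.-tuple I}) (a : n.-tuple I) :
  spanning S -> 0 < n -> a \in S -> branching n a <= \prod_(t < n) #|Pset S a t|.
Proof.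
case: n S a => [//|n] S a span_S _ Sa; pose x0 := tnth a ord0.
have Pfirst_gt0 : 0 < #|Pset S a n|.
  apply/card_gt0P; exists (nth x0 a 0).
  rewrite /Pset ltnn inE; apply/existsP; exists a.
  by rewrite Sa onthE (nth_map x0) ?size_tuple /=.
rewrite big_ord_recr /= (branching_nth x0) ?size_tuple //.
apply: leq_trans (leq_pmulr _ Pfirst_gt0); apply: leq_prod => t _; apply: subset_leq_card.
exact: Dset_sub_Pset span_S Sa (ltn_ord t).
Qed.

Lemma Pset_subset n (S1 S2 : {set n.-tuple I}) (a : n.-tuple I) t :
  S1 \subset S2 -> Pset S1 a t \subset Pset S2 a t.
Proof.
move=> sub_S; rewrite /Pset /Pfirst; case: ifP => _; apply/subsetP => i;
  rewrite !inE => /existsP [b /andP [S1b Pb]]; apply/existsP; exists b;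
  by rewrite (subsetP sub_S _ S1b).
Qed.

Lemma max_branching_le_Nspan n (S0 S : {set n.-tuple I}) :
  spanning S0 -> S0 \subset S -> 0 < n -> max_branching n <= Nspan S.
Proof.
move=> span_S0 sub_S n_gt0; apply/bigmax_leqP => a /= sorted_a.
have S0a := sorted_mem_spanning span_S0 n_gt0 sorted_a.
apply: leq_trans (leq_bigmax_cond _ (subsetP sub_S _ S0a)).
apply: leq_trans (branching_le_prod_Pset span_S0 n_gt0 S0a) _.
by apply: leq_prod => t _; apply: subset_leq_card; apply: Pset_subset.
Qed.

Definition Wset n : {set n.-tuple I} := [set a | inW F cov G a].

Lemma Wset_spanning n : 0 < n -> spanning (Wset n).
Proof.
case: qip => [[_ [_ [covers image_Q]]] _] n_gt0; split.
  move=> x Qx; have [i cov_x] := covers x Qx; exists i; split => //.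
  have size_a : size (i :: traject succ_cell (succ_cell i) n.-1) == n.
    by rewrite /= size_traject prednK.
  rewrite inE; apply/existsP; exists (Tuple size_a).
  by rewrite inE inWE /= path_succ_cell eqxx.
move=> a Wa t i lt_t a_t x y cov_x Fxy.
have [j cov_y] := covers y (image_Q _ _ _ cov_x Fxy); exists j; split => //.
have lt_ta : t.+1 < size a by rewrite size_tuple -ltn_predRL.
have n_split : n = t.+1 + (n - t.+2).+1 by move: lt_ta; rewrite size_tuple; lia.
pose b := take t.+1 a ++ traject succ_cell j (n - t.+2).+1.
have size_ta : size (take t.+1 a) = t.+1 by rewrite size_takel // ltnW.
have size_b : size b == n by rewrite size_cat size_ta size_traject -n_split.
rewrite /Pset lt_t inE; apply/existsP; exists (Tuple size_b).
rewrite inE inWE (_ : tval (Tuple size_b) = b) // take_size_cat //.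
rewrite onth_cat size_ta ltnn subnn !eqxx !andbT.
have sorted_a : sorted transb a by rewrite -inWE -inE.
have transb_tj : transb (nth i a t) j.
  by rewrite (onth_nth i _ _ _ a_t); apply/asboolP; exists x, y.
rewrite /b trajectS.
exact: sorted_take_cat_path sorted_a (ltnW lt_ta) transb_tj (path_succ_cell j _).
Qed.

Lemma Pset_Wset_sub_Dset (x0 : I) n (a : n.-tuple I) t :
  t < n.-1 -> Pset (Wset n) a t \subset D (nth x0 a t).
Proof.
move=> lt_t; rewrite /Pset lt_t; apply/subsetP => j.
rewrite inE => /existsP [b /and3P [Wb /eqP eq_ba /eqP b_t]].
have lt_tb : t.+1 < size b by rewrite size_tuple -ltn_predRL.
rewrite -(nth_take x0 (ltnSn t)) -eq_ba nth_take // in_Dset -(onth_nth x0 _ _ _ b_t).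
by apply: (sortedP x0); rewrite -?inWE -?inE.
Qed.

Lemma Nspan_Wset_le n : 0 < n -> Nspan (Wset n) <= #|I| * max_branching n.
Proof.
case: n => [//|n] _; apply/bigmax_leqP => a Wa; pose x0 := tnth a ord0.
have sorted_a : sorted transb a by rewrite -inWE -inE.
rewrite big_ord_recr /= mulnC leq_mul ?max_card //.
apply: leq_trans (branching_le_max (size_tuple a) sorted_a).
rewrite (branching_nth x0) ?size_tuple //.
apply: leq_prod => t _; apply: subset_leq_card.
exact: Pset_Wset_sub_Dset.
Qed.

Lemma r_inv_le n : 0 < n -> r_inv F Q cov G n <= #|I| * max_branching n.
Proof.
move=> n_gt0; apply: leq_trans (Nspan_Wset_le n_gt0).
have span_W : `[< spanning (Wset n) >] by apply/asboolP; apply: Wset_spanning.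
have := Order.TotalTheory.bigmin_le_cond (T := nat) (P := fun S => `[< spanning S >])
  (Nspan [set: n.-tuple I]) (@Nspan I n) span_W.
by rewrite minEnat.
Qed.

Lemma max_branching_le_r_inv n : 0 < n -> max_branching n <= r_inv F Q cov G n.
Proof.
move=> n_gt0; elim/big_ind: (r_inv _ _ _ _ _) => [||S /asboolP span_S].
- exact: max_branching_le_Nspan (Wset_spanning n_gt0) (subsetT _) n_gt0.
- by move=> m k le_m le_k; rewrite leq_min le_m le_k.
- exact: max_branching_le_Nspan span_S (subxx _) n_gt0.
Qed.

Lemma max_branching_submul m k : 0 < m -> 0 < k ->
  max_branching (m + k) <= max_branching m * (#|I| * max_branching k).
Proof.
case: m => [//|m]; case: k => [//|k] _ _.
apply/bigmax_leqP => a; rewrite inWE => sorted_a; pose x0 := tnth a ord0.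
have size_a : size a = m.+1 + k.+1 by rewrite size_tuple.
rewrite /branching (_ : (m.+1 + k.+1).-1 = m + k.+1) ?addSn // takeD.
rewrite (drop_nth x0) ?size_a ?ltn_addr //= big_cat big_cons /= !mulnA.
apply: leq_mul; [apply: leq_mul; [|exact: max_card]|].
- rewrite -(take_takel _ (leqnSn m)).
  apply: (branching_le_max _ (take_sorted _ sorted_a)).
  by rewrite size_takel // size_a leq_addr.
- apply: (branching_le_max _ (drop_sorted _ sorted_a)).
  by rewrite size_drop size_a addKn.
Qed.

Local Open Scope R_scope.

Lemma sum_wgt_log2_prod (s : seq I) :
  \big[Rplus/R0]_(A <- s) wgt F cov G A = log2 (INR (\prod_(A <- s) #|D A|)).
Proof.
elim: s => [|A s IH]; first by rewrite !big_nil /log2 /= ln_1 /Rdiv Rmult_0_l.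
rewrite !big_cons IH log2_INR_mul ?card_Dset_gt0 //.
by apply: prodn_gt0 => B; apply: card_Dset_gt0.
Qed.

Lemma max_path_weightE n :
  \big[Rmax/R0]_(a : n.-tuple I | inW F cov G a) path_weight F cov G a
  = log2 (INR (max_branching n)).
Proof.
rewrite (big_morph (fun k => log2 (INR k)) log2_INR_max log2_INR0).
by apply: eq_bigr => a _; apply: sum_wgt_log2_prod.
Qed.

Lemma log2_max_branching_subadd m k :
  log2 (INR (#|I| * max_branching (m + k))%N)
  <= log2 (INR (#|I| * max_branching m)%N) + log2 (INR (#|I| * max_branching k)%N).
Proof.
have := log2_INR_ge0 (#|I| * max_branching 0)%N.
case: m => [|m]; first by rewrite add0n; lra.
case: k => [|k]; first by rewrite addn0; lra.
move=> _.
apply: Rle_trans (log2_INR_mul_le _ _); apply: log2_INR_le.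
by rewrite -mulnA leq_mul2l max_branching_submul ?orbT.
Qed.

End QuasiInvariantPartition.

Theorem theorem3p1 (X U : Type) (F : X -> U -> X -> Prop) (Q : X -> Prop)
  (I : finType) (cov : I -> X -> Prop) (G : I -> U) :
  is_system F ->
  controlled_invariant F Q ->
  quasi_invariant_partition F Q cov G ->
  exists L : R,
    Un_cv (hinv_seq F Q cov G) L /\ Un_cv (wpath_seq F cov G) L.
Proof.
move=> system_F _ qip.
have [L cv_L] := fekete (fun n => log2_INR_ge0 _) (log2_max_branching_subadd F cov G).
have r_inv_bounds n : (0 < n)%N ->
    (max_branching F cov G n <= r_inv F Q cov G n <= #|I| * max_branching F cov G n)%N.
  by move=> n_gt0; rewrite max_branching_le_r_inv ?r_inv_le.
exists L; split.
- apply: (Un_cv_div_close (log2_INR_ge0 #|I|) cv_L) => n /r_inv_bounds /andP [lb ub].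
  exact: dist_log2_INR_le lb ub.
- rewrite /wpath_seq; apply: (Un_cv_div_close (log2_INR_ge0 #|I|) cv_L) => n.
  move=> /r_inv_bounds /andP [lb ub]; rewrite (max_path_weightE system_F qip).
  exact: dist_log2_INR_le (leqnn _) (leq_trans lb ub).
Qed.
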